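(* Let $0<m<L$, $\kappa=L/m$, $\delta\in(0,1)$, and suppose $\alpha>\alpha_-:=\frac{1}{1-\delta}\left(\frac{2}{L+m}-\frac{\delta}{m}\right)$ and \[ \frac1L\le\alpha\le\frac{2}{(1+\delta)L+(1-\delta)m}. \] Define \begin{multline*} F(t,\rho,\lambda,\gamma) = -\alpha^2\big((L-m)^2-2mL\lambda(1-\delta^2)\big)\rho^2-\gamma^2(t-1+L\alpha)^2 + 2\lambda\alpha\rho^2(L+m)(t-1) \\ + \lambda\rho^2(2-\lambda\delta^2)(t-1)^2 - 2\alpha\gamma\big((L-m)-m\lambda(1-\delta^2)\big)(1-\alpha L-t)t + 2\lambda\gamma\big((1-\alpha L)t-\rho^2\big)(t-1), \end{multline*} and set $\rho_\star=1-\alpha m(1-\delta)$, $\lambda_\star=\dfrac{2-\alpha(L+m)}{\delta^2}$, and \[ \gamma_\star=\frac{\rho_\star\big(\kappa-1+(\kappa+1)(\delta-\rho_\star)\big)}{(\kappa-(1-\delta))\,\delta}. \] Then $\partial_t F(0,\rho_\star,\lambda_\star,\gamma_\star)\le 0$.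
   Context: $\partial_t F$ denotes the partial derivative of $F$ with respect to its first argument $t$. *)

From Stdlib Require Import Reals.
From Coquelicot Require Import Coquelicot.
Open Scope R_scope.

Definition F (L m alpha delta : R) (t rho lam gam : R) : R :=
  - alpha^2 * ((L - m)^2 - 2 * m * L * lam * (1 - delta^2)) * rho^2
  - gam^2 * (t - 1 + L * alpha)^2
  + 2 * lam * alpha * rho^2 * (L + m) * (t - 1)
  + lam * rho^2 * (2 - lam * delta^2) * (t - 1)^2
  - 2 * alpha * gam * ((L - m) - m * lam * (1 - delta^2)) * (1 - alpha * L - t) * t
  + 2 * lam * gam * ((1 - alpha * L) * t - rho^2) * (t - 1).

Definition rho_star (m alpha delta : R) : R := 1 - alpha * m * (1 - delta).
Definition lambda_star (L m alpha delta : R) : R := (2 - alpha * (L + m)) / delta^2.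
Definition gamma_star (L m alpha delta : R) : R :=
  let kappa := L / m in
  let r := rho_star m alpha delta in
  r * (kappa - 1 + (kappa + 1) * (delta - r)) / ((kappa - (1 - delta)) * delta).
Definition alpha_minus (L m delta : R) : R :=
  / (1 - delta) * (2 / (L + m) - delta / m).

(* With
   lambda_star * delta^2 = 2 - alpha (L + m) the rho^2-terms cancel, and for the
   starred parameters the derivative factors as
     -2 gamma (p eps / delta + p gamma + lambda rho (delta + eps)),
   where p = alpha L - 1 >= 0 encodes the lower bound on alpha and
   eps = 2 - alpha ((1 + delta) L + (1 - delta) m) >= 0 the upper bound.
   The lower bound alpha > alpha_minus is exactly what makes gamma_star
   positive, so every factor has the right sign. *)

From Stdlib Require Import Reals Lra.
From Coquelicot Require Import Coquelicot.
Open Scope R_scope.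

Lemma Derive_F_0 (L m alpha delta rho lam gam : R) :
  Derive (fun t => F L m alpha delta t rho lam gam) 0 =
  - 2 * gam^2 * (L * alpha - 1) + 2 * lam * alpha * rho^2 * (L + m)
  - 2 * lam * rho^2 * (2 - lam * delta^2)
  - 2 * alpha * gam * ((L - m) - m * lam * (1 - delta^2)) * (1 - alpha * L)
  - 2 * lam * gam * (1 - alpha * L + rho^2).
Proof.
  apply is_derive_unique; unfold F.
  auto_derive; [exact I | ring].
Qed.

Lemma Derive_F_0_star (L m alpha delta gam : R) :
  delta <> 0 ->
  let p := alpha * L - 1 in
  let eps := 2 - alpha * ((1 + delta) * L + (1 - delta) * m) in
  let rho := rho_star m alpha delta in
  let lam := lambda_star L m alpha delta in
  Derive (fun t => F L m alpha delta t rho lam gam) 0 =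
  - 2 * gam * (p * eps / delta + p * gam + lam * rho * (delta + eps)).
Proof.
  intros hdelta p eps rho lam.
  rewrite Derive_F_0.
  unfold p, eps, rho, lam, rho_star, lambda_star.
  field; exact hdelta.
Qed.

Lemma gamma_star_alpha_minus (L m alpha delta : R) :
  m <> 0 -> L + m <> 0 -> delta <> 0 -> delta <> 1 -> L - (1 - delta) * m <> 0 ->
  gamma_star L m alpha delta =
  rho_star m alpha delta * ((1 - delta) * (L + m) * (alpha - alpha_minus L m delta))
  / ((L / m - (1 - delta)) * delta).
Proof.
  intros hm hLm hd0 hd1 hden.
  unfold gamma_star, alpha_minus, rho_star; cbv zeta.
  field; repeat split; lra.
Qed.

Lemma rho_star_pos (L m alpha delta : R) :
  0 < m -> m < L -> 0 <= delta -> 0 < alpha ->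
  alpha * ((1 + delta) * L + (1 - delta) * m) <= 2 ->
  0 < rho_star m alpha delta.
Proof.
  intros hm hmL hd ha hhi.
  assert (0 < alpha * (L - m)) by nra.
  assert (0 <= alpha * delta * (L + m)) by (apply Rmult_le_pos; nra).
  unfold rho_star; nra.
Qed.

Lemma gamma_star_pos (L m alpha delta : R) :
  0 < m -> m < L -> 0 < delta < 1 ->
  alpha_minus L m delta < alpha -> 0 < rho_star m alpha delta ->
  0 < gamma_star L m alpha delta.
Proof.
  intros hm hmL hd hmin hrho.
  assert (hkappa : 1 < L / m) by (apply Rlt_div_r; lra).
  rewrite gamma_star_alpha_minus; try nra.
  apply Rdiv_lt_0_compat.
  - apply Rmult_lt_0_compat; [lra|].
    apply Rmult_lt_0_compat; [nra | lra].
  - apply Rmult_lt_0_compat; lra.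
Qed.

Theorem lemma3p4 (L m delta alpha : R) :
  0 < m -> m < L -> 0 < delta -> delta < 1 ->
  alpha_minus L m delta < alpha ->
  1 / L <= alpha ->
  alpha <= 2 / ((1 + delta) * L + (1 - delta) * m) ->
  Derive (fun t => F L m alpha delta t (rho_star m alpha delta)
                     (lambda_star L m alpha delta) (gamma_star L m alpha delta)) 0
  <= 0.
Proof.
  intros hm hmL hd0 hd1 hmin hlo hhi.
  apply Rle_div_l in hlo; [|lra].
  apply Rle_div_r in hhi; [|nra].
  assert (ha : 0 < alpha) by nra.
  assert (hrho := rho_star_pos L m alpha delta hm hmL (Rlt_le _ _ hd0) ha hhi).
  assert (hgam := gamma_star_pos L m alpha delta hm hmL (conj hd0 hd1) hmin hrho).
  assert (hlam : 0 <= lambda_star L m alpha delta).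
  { apply Rdiv_le_0_compat; [nra | apply pow_lt; lra]. }
  rewrite Derive_F_0_star by lra.
  set (p := alpha * L - 1).
  set (eps := 2 - alpha * ((1 + delta) * L + (1 - delta) * m)).
  assert (hp : 0 <= p) by (unfold p; lra).
  assert (heps : 0 <= eps) by (unfold eps; lra).
  assert (0 <= p * eps / delta)
    by (apply Rdiv_le_0_compat; [apply Rmult_le_pos|]; lra).
  assert (0 <= lambda_star L m alpha delta * rho_star m alpha delta * (delta + eps))
    by (apply Rmult_le_pos; [apply Rmult_le_pos|]; lra).
  nra.
Qed.
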